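(* For every $k\in\mathbb{N}$, the sequence $\{\alpha_k(n)\}_{n=2}^\infty$ defined by $\alpha_k(n)=\dfrac{\ell_k(n)}{\ell_k(n-1)}$ is decreasing and $\lim_{n\to\infty}\dfrac{\ell_k(n)}{\ell_k(n-1)}=1$.
   Context: For $x\ge1$ define $\ell_0(x)=1$, $\ell_1(x)=1+\ln x$, and recursively $\ell_j(x)=1+\ln\ell_{j-1}(x)$ for $j\ge2$. *)

From Stdlib Require Import Reals.
Open Scope R_scope.

Fixpoint ell (j : nat) (x : R) : R :=
  match j with
  | O => 1
  | S O => 1 + ln x
  | S j' => 1 + ln (ell j' x)
  end.

Definition alpha (k n : nat) : R := ell k (INR n) / ell k (INR n - 1).

From Stdlib Require Import Reals Lra Lia.
From Coquelicot Require Import Rcomplements.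
Open Scope R_scope.

(* Write L t = 1 + ln t, so that ell (S (S k)) = L o ell (S k), and call f
   admissible on [1, oo) if f >= 1, f is nondecreasing, and its ratio
   f (x + 1) / f x is nonincreasing and at most 1 + 1/x.  Admissibility
   passes from f to L o f because
     L (f (x + 1)) / L (f x) = 1 + ln (f (x + 1) / f x) / L (f x),
   a nonincreasing numerator over a nondecreasing denominator >= 1, and
   ln r <= r - 1 keeps the bound.  The identity and the constant 1 are
   admissible, hence so is every ell k; with x = n - 1 this gives
   1 <= alpha k n <= 1 + 1/(n - 1) and the monotonicity of alpha k. *)

Lemma ln_nonneg x : 1 <= x -> 0 <= ln x.
Proof. intros Hx. rewrite <- ln_1. apply ln_le; lra. Qed.

Lemma ln_le_sub_one x : 0 < x -> ln x <= x - 1.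
Proof.
  intros Hx. pose proof (exp_ineq1_le (ln x)) as Hexp.
  rewrite exp_ln in Hexp; lra.
Qed.

Lemma Rdiv_le_compat u v a c :
  0 <= v -> v <= u -> 0 < a -> a <= c -> v / c <= u / a.
Proof.
  intros Hv Hvu Ha Hac. unfold Rdiv.
  apply Rmult_le_compat; try lra.
  - left; apply Rinv_0_lt_compat; lra.
  - apply Rinv_le_contravar; lra.
Qed.

Definition ell_step (t : R) : R := 1 + ln t.

Definition ratio (f : R -> R) (x : R) : R := f (x + 1) / f x.

Record admissible (f : R -> R) : Prop := {
  admissible_ge1 : forall x, 1 <= x -> 1 <= f x;
  admissible_mono : forall x y, 1 <= x <= y -> f x <= f y;
  admissible_ratio_antitone : forall x y, 1 <= x <= y -> ratio f y <= ratio f x;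
  admissible_ratio_le : forall x, 1 <= x -> ratio f x <= 1 + / x }.

Lemma ratio_ge1 f x : admissible f -> 1 <= x -> 1 <= ratio f x.
Proof.
  intros Hf Hx. pose proof (admissible_ge1 f Hf x Hx).
  pose proof (admissible_mono f Hf x (x + 1) ltac:(lra)).
  unfold ratio. apply Rle_div_r; lra.
Qed.

Lemma ratio_ell_step f x :
  1 <= f x -> 1 <= f (x + 1) ->
  ratio (fun t => ell_step (f t)) x = 1 + ln (ratio f x) / ell_step (f x).
Proof.
  intros Hfx Hfx1. assert (0 <= ln (f x)) by now apply ln_nonneg.
  unfold ratio, ell_step. rewrite ln_div by lra. field; lra.
Qed.

Lemma admissible_step f : admissible f -> admissible (fun x => ell_step (f x)).
Proof.
  intros Hf.
  pose proof (admissible_ge1 f Hf) as Hge1.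
  pose proof (admissible_mono f Hf) as Hmono.
  assert (Hstep_ge1 : forall x, 1 <= x -> 1 <= ell_step (f x)).
  { intros x Hx. pose proof (ln_nonneg _ (Hge1 x Hx)). unfold ell_step; lra. }
  assert (Hln_ratio : forall x, 1 <= x -> 0 <= ln (ratio f x)).
  { intros x Hx. apply ln_nonneg, ratio_ge1; assumption. }
  split.
  - exact Hstep_ge1.
  - intros x y Hxy. unfold ell_step. apply Rplus_le_compat_l, ln_le.
    + pose proof (Hge1 x (proj1 Hxy)); lra.
    + now apply Hmono.
  - intros x y Hxy.
    rewrite !ratio_ell_step by (apply Hge1; lra).
    apply Rplus_le_compat_l, Rdiv_le_compat.
    + apply Hln_ratio; lra.
    + apply ln_le.
      * pose proof (ratio_ge1 f y Hf ltac:(lra)); lra.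
      * now apply admissible_ratio_antitone.
    + pose proof (Hstep_ge1 x (proj1 Hxy)); lra.
    + apply Rplus_le_compat_l, ln_le; [pose proof (Hge1 x (proj1 Hxy)); lra |].
      now apply Hmono.
  - intros x Hx.
    rewrite ratio_ell_step by (apply Hge1; lra).
    pose proof (ratio_ge1 f x Hf Hx).
    pose proof (admissible_ratio_le f Hf x Hx).
    pose proof (ln_le_sub_one (ratio f x) ltac:(lra)).
    assert (ln (ratio f x) / ell_step (f x) <= ln (ratio f x) / 1).
    { apply Rdiv_le_compat; try lra; [now apply Hln_ratio | now apply Hstep_ge1]. }
    lra.
Qed.

Lemma admissible_id : admissible (fun x => x).
Proof.
  assert (Hratio : forall x, 1 <= x -> ratio (fun t => t) x = 1 + / x).
  { intros x Hx. unfold ratio. field. lra. }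
  split; intros; try lra.
  - rewrite !Hratio by lra.
    apply Rplus_le_compat_l, Rinv_le_contravar; lra.
  - rewrite Hratio by lra. lra.
Qed.

Lemma admissible_one : admissible (fun _ => 1).
Proof.
  assert (Hratio : forall x, ratio (fun _ => 1) x = 1) by (intros; unfold ratio; field).
  split; intros; rewrite ?Hratio; try lra.
  assert (0 < / x) by (apply Rinv_0_lt_compat; lra). lra.
Qed.

Lemma admissible_ell k : admissible (ell k).
Proof.
  destruct k as [|k]; [exact admissible_one |].
  induction k as [|k IH].
  - exact (admissible_step _ admissible_id).
  - exact (admissible_step _ IH).
Qed.

Lemma alpha_ratio k n : alpha k n = ratio (ell k) (INR n - 1).
Proof. unfold alpha, ratio. now replace (INR n - 1 + 1) with (INR n) by ring. Qed.

Lemma Un_cv_one_plus_inv_pred (u : nat -> R) :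
  (forall n, (2 <= n)%nat -> 1 <= u n <= 1 + / (INR n - 1)) -> Un_cv u 1.
Proof.
  intros Hu eps Heps.
  destruct (INR_unbounded (/ eps + 1)) as [N HN].
  exists (Nat.max N 2). intros n Hn.
  assert (HNn : INR N <= INR n) by (apply le_INR; lia).
  assert (Hinv_eps : 0 < / eps) by now apply Rinv_0_lt_compat.
  destruct (Hu n ltac:(lia)) as [Hlow Hup].
  assert (/ (INR n - 1) < eps).
  { rewrite <- (Rinv_inv eps). apply Rinv_lt_contravar; [apply Rmult_lt_0_compat |]; lra. }
  unfold Rdist. rewrite Rabs_right; lra.
Qed.

Theorem lemma2p3 (k : nat) :
  (forall n : nat, (2 <= n)%nat -> alpha k (S n) <= alpha k n) /\
  Un_cv (fun n : nat => alpha k n) 1.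
Proof.
  pose proof (admissible_ell k) as Hell.
  split.
  - intros n Hn. rewrite !alpha_ratio, S_INR.
    assert (2 <= INR n) by (apply (le_INR 2) in Hn; simpl in Hn; lra).
    apply admissible_ratio_antitone; [exact Hell | lra].
  - apply Un_cv_one_plus_inv_pred. intros n Hn. rewrite alpha_ratio.
    assert (2 <= INR n) by (apply (le_INR 2) in Hn; simpl in Hn; lra).
    split.
    + apply ratio_ge1; [exact Hell | lra].
    + apply admissible_ratio_le; [exact Hell | lra].
Qed.
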